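(* Let $f,g\colon X\to Y$ and $f',g'\colon X'\to Y'$ be continuous maps, and assume that $X\times X'$ is a normal space. Then the maps $f\times f',\,g\times g'\colon X\times X'\to Y\times Y'$ satisfy $\mathrm{D}(f\times f',g\times g')\leq \mathrm{D}(f,g)+\mathrm{D}(f',g')$.
   Context: For continuous maps $f,g\colon X\to Y$, the homotopic distance $\mathrm{D}(f,g)$ is the least integer $n\geq 0$ such that there is an open cover $\{U_0,\dots,U_n\}$ of $X$ with $f|_{U_j}\simeq g|_{U_j}$ for all $j$; if no such cover exists, $\mathrm{D}(f,g)=\infty$. *)

From HB Require Import structures.
From mathcomp Require Import all_boot all_order all_algebra.
From mathcomp Require Import all_classical all_reals all_analysis.
From mathcomp Require Import Rstruct Rstruct_topology.
Set Implicit Arguments. Unset Strict Implicit. Unset Printing Implicit Defensive.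
Import Order.TTheory GRing.Theory Num.Theory.
Local Open Scope classical_set_scope.

(* f|_U and g|_U are homotopic (as maps U -> Y, U with the subspace topology):
   there is H : U x [0,1] -> Y continuous with H(-,0)=f, H(-,1)=g on U. *)
Definition homotopic_on {X Y : topologicalType} (U : set X) (f g : X -> Y) :=
  exists H : X * Rdefinitions.R -> Y,
    {within U `*` `[0%R, 1%R], continuous H} /\
    (forall x, U x -> H (x, 0%R) = f x) /\
    (forall x, U x -> H (x, 1%R) = g x).

Definition hdist_cover {X Y : topologicalType} (f g : X -> Y) (n : nat) :=
  exists U : nat -> set X,
    (forall j, (j <= n)%N -> open (U j)) /\
    (forall x : X, exists2 j, (j <= n)%N & U j x) /\
    (forall j, (j <= n)%N -> homotopic_on (U j) f g).

(* Homotopic distance D(f,g): Some n for the least such n, None for infinity. *)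
Definition hdist {X Y : topologicalType} (f g : X -> Y) : option nat :=
  match pselect (exists n, hdist_cover f g n) with
  | left h => Some (@ex_minn (fun n => `[< hdist_cover f g n >])
                      (let: ex_intro n hn := h in ex_intro _ n (asboolT hn)))
  | right _ => None
  end.

Definition oadd (a b : option nat) : option nat :=
  match a, b with Some m, Some n => Some (m + n)%N | _, _ => None end.
Definition ole (a b : option nat) : Prop :=
  match a, b with
  | _, None => True
  | None, Some _ => False
  | Some m, Some n => (m <= n)%N
  end.

Definition prod_map {X X' Y Y' : Type} (f : X -> Y) (f' : X' -> Y')
  : X * X' -> Y * Y' := fun p => (f p.1, f' p.2).

(* Take open covers U_0, ..., U_n of X and V_0, ..., V_m of X' on which f ~ g
   and f' ~ g'.  By normality of X * X', the pulled-back covers are refined by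
   continuous functions phi_i, psi_j whose positivity sets still cover X * X'
   and lie in U_i * X' and X * V_j respectively.  Call S a top set at z if the
   phi's and psi's indexed by S are positive at z and strictly larger there
   than all the others; the points having a given top set form an open set,
   and those for top sets of equal size are pairwise disjoint.  For
   k = 0, ..., n + m let O_k be the union of these open sets over the top sets
   of size k + 2 containing some phi_i and some psi_j: on such a piece the
   product of the homotopies on U_i and V_j is defined, and the pieces are
   disjoint, so the homotopies glue on O_k.  The O_k cover X * X': at z, the
   indices whose value is at least min(phi_i z, psi_j z), for positive
   phi_i z and psi_j z, form a top set. *)

From mathcomp Require Import all_boot all_order all_algebra.
From mathcomp Require Import all_classical all_reals all_analysis.
From mathcomp Require Import Rstruct Rstruct_topology.
Set Implicit Arguments. Unset Strict Implicit. Unset Printing Implicit Defensive.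
Import Order.TTheory GRing.Theory Num.Theory.
Local Open Scope classical_set_scope.
Local Open Scope ring_scope.

Local Notation R := Rdefinitions.R.

Section within_continuity.
Context {T U V : topologicalType}.

Lemma within_continuous_local (A : set T) (h : T -> U) :
  (forall x, A x ->
    exists2 N, open N /\ N x & {within A `&` N, continuous h}) ->
  {within A, continuous h}.
Proof.
move=> loc; apply/subspace_continuousP => x Ax.
have [N [oN Nx] /subspace_continuousP hN] := loc x Ax.
move=> P /(hN x (conj Ax Nx)); rewrite !nbhs_simpl /within /=.
by apply: filterS2 (open_nbhs_nbhs (conj oN Nx)) => y Ny hy Ay; apply: hy.
Qed.

Lemma within_continuous_compr (A : set T) (B : set U)
    (f : T -> U) (g : U -> V) :
  continuous f -> f @` A `<=` B -> {within B, continuous g} ->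
  {within A, continuous (g \o f)}.
Proof.
move=> cf fAB /subspace_continuousP cg; apply/subspace_continuousP => x Ax.
apply: cvg_comp (cg _ (fAB _ (imageP f Ax))) => P.
rewrite !nbhs_simpl /within /= => /cf; rewrite nbhs_simpl /=.
by apply: filterS => y PBy Ay; apply/PBy/fAB; exists y.
Qed.

Lemma within_continuous_pair (A : set T) (f : T -> U) (g : T -> V) :
  {within A, continuous f} -> {within A, continuous g} ->
  {within A, continuous (fun x => (f x, g x))}.
Proof.
move=> /subspace_continuousP cf /subspace_continuousP cg.
by apply/subspace_continuousP => x Ax; apply: cvg_pair; [exact: cf | exact: cg].
Qed.

End within_continuity.

Lemma continuous_fst_id {T U V : topologicalType} :
  continuous (fun w : (T * U) * V => (w.1.1, w.2)).
Proof.
move=> w; apply: cvg_pair; last exact: cvg_snd.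
exact: cvg_comp cvg_fst cvg_fst.
Qed.

Lemma continuous_snd_id {T U V : topologicalType} :
  continuous (fun w : (T * U) * V => (w.1.2, w.2)).
Proof.
move=> w; apply: cvg_pair; last exact: cvg_snd.
exact: cvg_comp cvg_fst cvg_snd.
Qed.

Lemma open_setXT {T U : topologicalType} (A : set T) :
  open A -> open (A `*` [set: U]).
Proof.
by move=> oA; rewrite setXT; apply: open_comp oA => w _; exact: cvg_fst.
Qed.

Lemma open_setTX {T U : topologicalType} (B : set U) :
  open B -> open ([set: T] `*` B).
Proof.
by move=> oB; rewrite setTX; apply: open_comp oB => w _; exact: cvg_snd.
Qed.

Lemma open_gt0_continuous {T : topologicalType} (h : T -> R) :
  continuous h -> open [set z | 0 < h z].
Proof.
by move=> ch; apply: (@open_comp _ _ h [set x | 0 < x]) => [z _|];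
  [exact: ch | exact: open_gt].
Qed.

Section homotopic_on.
Context {X Y : topologicalType}.
Implicit Types (f g : X -> Y) (A B : set X).

Lemma homotopic_onS A B f g :
  A `<=` B -> homotopic_on B f g -> homotopic_on A f g.
Proof.
move=> AB [H [cH [H0 H1]]]; exists H; split.
  by apply: continuous_subspaceW cH; apply: setSX.
by split=> x /AB; [exact: H0 | exact: H1].
Qed.

Lemma homotopic_on_bigcup (I : Type) (D : set I) (W : I -> set X) f g :
  (forall i, D i -> open (W i)) -> trivIset D W ->
  (forall i, D i -> homotopic_on (W i) f g) ->
  homotopic_on (\bigcup_(i in D) W i) f g.
Proof.
move=> oW tW hW.
have /choice[Hs HsP] : forall i, exists Hi : X * R -> Y, D i ->
    [/\ {within W i `*` `[0%R, 1%R], continuous Hi},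
        forall x, W i x -> Hi (x, 0%R) = f x &
        forall x, W i x -> Hi (x, 1%R) = g x].
  move=> i; have [/hW [H [cH [H0 H1]]]|nDi] := pselect (D i); first by exists H.
  by exists (fun w => f w.1).
have /choice[sel selP] : forall x, exists o : option I,
    if o is Some i then D i /\ W i x else ~ (\bigcup_(i in D) W i) x.
  by move=> x; have [[i Di Wix]|nW] := pselect ((\bigcup_(i in D) W i) x);
    [exists (Some i) | exists None].
have selW i x : D i -> W i x -> sel x = Some i.
  move=> Di Wix; move: (selP x); case: (sel x) => [j [Dj Wjx]|]; last first.
    by case; exists i.
  by congr Some; apply: tW => //; exists x.
pose H w := if sel w.1 is Some i then Hs i w else f w.1.
have HE i w : D i -> W i w.1 -> H w = Hs i w.
  by move=> Di Wi; rewrite /H (selW i).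
exists H; split; [|split].
- apply: within_continuous_local => -[x t] [[i Di Wix] It].
  exists (W i `*` setT); first by split=> //; exact/open_setXT/oW.
  have [cHi _ _] := HsP i Di.
  apply: subspace_eq_continuous (continuous_subspaceW _ cHi).
  + by move=> w /set_mem [_ [Wiw _]]; exact: (esym (HE i w Di Wiw)).
  + by move=> w [[_ Iw] [Wiw _]].
- by move=> x [i Di Wix]; rewrite (HE i) //; have [] := HsP i Di; auto.
- by move=> x [i Di Wix]; rewrite (HE i) //; have [] := HsP i Di; auto.
Qed.

End homotopic_on.

Lemma homotopic_on_prod {X Y X' Y' : topologicalType} (U : set X) (U' : set X')
    (f g : X -> Y) (f' g' : X' -> Y') :
  homotopic_on U f g -> homotopic_on U' f' g' ->
  homotopic_on (U `*` U') (prod_map f f') (prod_map g g').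
Proof.
move=> [H [cH [H0 H1]]] [H' [cH' [H0' H1']]].
exists (fun w => (H (w.1.1, w.2), H' (w.1.2, w.2))); split; [|split].
- apply: within_continuous_pair.
  + apply: (within_continuous_compr continuous_fst_id _ cH).
    by move=> _ [w [[Uw _] Iw] <-].
  + apply: (within_continuous_compr continuous_snd_id _ cH').
    by move=> _ [w [[_ Uw] Iw] <-].
- by move=> [x x'] [/= Ux Ux']; rewrite /prod_map H0 // H0'.
- by move=> [x x'] [/= Ux Ux']; rewrite /prod_map H1 // H1'.
Qed.

Section normal_shrinking.
Context {Z : topologicalType}.
Hypothesis nZ : normal_space Z.

Lemma normal_urysohn_open (C U : set Z) : closed C -> open U -> C `<=` U ->
  exists h : Z -> R,
    [/\ continuous h, C `<=` [set z | 0 < h z] & [set z | 0 < h z] `<=` U].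
Proof.
move=> cC oU CU.
have UC0 : ~` U `&` C = set0.
  by rewrite setIC; apply/disjoints_subset; rewrite setCK.
have /(@uniform_separatorP _ R) [h [ch _ h0 h1]] :=
  (@normal_separatorP R Z).1 nZ _ _ (open_closedC oU) cC UC0.
exists h; split => // z /=.
  by move=> Cz; rewrite (h1 (h z)) ?ltr01 //; exists z.
move=> hz; apply: contrapT => nUz.
by move: hz; rewrite (h0 (h z)) ?ltxx //; exists z.
Qed.

Variables (U : nat -> set Z) (n : nat).
Hypothesis oU : forall j, (j <= n)%N -> open (U j).

Let shrunk_below k (phi : nat -> Z -> R) :=
  [/\ forall j, continuous (phi j), forall j z, 0 < phi j z -> U j z &
      forall z, (exists2 j, (j < k)%N & 0 < phi j z) \/
                (exists2 j, (k <= j <= n)%N & U j z)].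

Let shrink_step k phi :
  (k <= n)%N -> shrunk_below k phi -> exists psi, shrunk_below k.+1 psi.
Proof.
move=> kn [cphi phiU cover].
pose O := \bigcup_(j in [set j | (j < k)%N]) [set z | 0 < phi j z] `|`
          \bigcup_(j in [set j | (k < j <= n)%N]) U j.
have oO : open O.
  apply: openU; apply: bigcup_open => j /=.
    by move=> _; exact: open_gt0_continuous.
  by case/andP => _; exact: oU.
have OCU : ~` O `<=` U k.
  move=> z Oz; case: (cover z) => [[j jk pj]|[j /andP[kj jn] Uj]].
    by case: Oz; left; exists j.
  have [kj'|jk] := ltnP k j.
    by case: Oz; right; exists j => //=; rewrite kj'.
  by have -> : k = j by apply/eqP; rewrite eqn_leq kj jk.
have [h [ch Oh hU]] := normal_urysohn_open (open_closedC oO) (oU kn) OCU.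
exists (fun j => if j == k then h else phi j); split.
- by move=> j; case: eqP.
- by move=> j z; case: eqP => [->|_]; [exact: hU | exact: phiU].
move=> z; have [[[j /= jk pj]|[j /= kjn Uj]]|nOz] := pselect (O z).
- left; exists j; first exact: ltnW.
  by have /negbTE -> : j != k by rewrite ltn_eqF.
- by right; exists j.
- by left; exists k; rewrite ?eqxx //; exact: Oh.
Qed.

Lemma normal_open_cover_gt0 : (forall z, exists2 j, (j <= n)%N & U j z) ->
  exists phi : nat -> Z -> R,
    [/\ forall j, continuous (phi j), forall j z, 0 < phi j z -> U j z &
        forall z, exists2 j, (j <= n)%N & 0 < phi j z].
Proof.
move=> cU.
have shrunk k : (k <= n.+1)%N -> exists phi, shrunk_below k phi.
  elim: k => [_|k IH kn]; last first.
    by have [phi] := IH (ltnW kn); exact: shrink_step.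
  exists (fun _ _ => 0); split => [j|j z|z]; first exact: cst_continuous.
    by rewrite ltxx.
  by right; have [j jn Uj] := cU z; exists j.
have [phi [cphi phiU cover]] := shrunk n.+1 (leqnn _).
exists phi; split => // z.
case: (cover z) => [[j jn pj]|[j /andP[nj jn]]]; first by exists j.
by rewrite ltnNge jn in nj.
Qed.

End normal_shrinking.

Section top_set.
Context {Z : Type} {I : finType}.
Variable v : I -> Z -> R.

Definition top_set (S : {set I}) : set Z :=
  [set z | (forall a, a \in S -> 0 < v a z) /\
           (forall a b, a \in S -> b \notin S -> v b z < v a z)].

Lemma top_set_ge (c : R) z : 0 < c -> top_set [set a | c <= v a z] z.
Proof.
move=> c0; split=> [a|a b]; rewrite !inE; first exact: lt_le_trans.
by rewrite -ltNge => ca bc; exact: lt_le_trans ca.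
Qed.

Lemma top_set_card_inj (S S' : {set I}) z :
  top_set S z -> top_set S' z -> #|S| = #|S'| -> S = S'.
Proof.
move=> [_ gtS] [_ gtS'] cardSS'; apply/eqP; rewrite eqEcard cardSS' leqnn andbT.
apply: contraT => /subsetPn[a aS aS'].
have /subsetPn[b bS' bS] : ~~ (S' \subset S).
  apply/negP => S'S.
  have /eqP S'E : S' == S by rewrite eqEcard S'S cardSS' leqnn.
  by move: aS'; rewrite S'E aS.
by have := lt_trans (gtS a b aS bS) (gtS' b a bS' aS'); rewrite ltxx.
Qed.

End top_set.

Lemma open_top_set {Z : topologicalType} {I : finType} (v : I -> Z -> R)
    (S : {set I}) :
  (forall a, continuous (v a)) -> open (top_set v S).
Proof.
move=> cv; rewrite openE => z [pos gt].
have near_pos a : \forall w \near z, a \in S -> 0 < v a w.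
  have [aS|aS] := boolP (a \in S); last exact: nearW.
  by near=> w => _; near: w; exact: cvgr_gt _ (cv a z) _ (pos a aS).
have near_gt (ab : I * I) :
    \forall w \near z, ab.1 \in S -> ab.2 \notin S -> v ab.2 w < v ab.1 w.
  case: ab => a b /=; have [aS|aS] := boolP (a \in S); last first.
    exact: nearW.
  have [bS|bS] := boolP (b \in S); first exact: nearW.
  have cvab : (v a - v b) @ z --> v a z - v b z.
    exact: (@cvgB _ R^o _ _ _ (v a) (v b) _ _ (cv a z) (cv b z)).
  have := gt a b aS bS; rewrite -subr_gt0 => /(cvgr_gt _ cvab).
  by apply: filterS => w /=; rewrite subr_gt0.
have near_gts : \forall w \near z,
    forall a b, a \in S -> b \notin S -> v b w < v a w.
  by apply: filterS (filter_forall _ near_gt) => w wgt a b; exact: (wgt (a, b)).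
near=> w; split; near: w; [exact: filter_forall _ near_pos | exact: near_gts].
Unshelve. all: by end_near.
Qed.

Section mixed_top_sets.
Context {Z : Type} (n m : nat) (phi psi : nat -> Z -> R).

Definition join_family (a : 'I_n.+1 + 'I_m.+1) : Z -> R :=
  match a with inl i => phi i | inr j => psi j end.

Definition mixed k (S : {set 'I_n.+1 + 'I_m.+1}) : Prop :=
  [/\ #|S| = k.+2, exists i, inl i \in S & exists j, inr j \in S].

Lemma mixed_top_set_cover z :
  (exists2 i, (i <= n)%N & 0 < phi i z) ->
  (exists2 j, (j <= m)%N & 0 < psi j z) ->
  exists2 k, (k <= n + m)%N & exists2 S, mixed k S & top_set join_family S z.
Proof.
move=> [i ilen phi_i] [j jlem psi_j].
pose c := Num.min (phi i z) (psi j z).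
pose S : {set 'I_n.+1 + 'I_m.+1} := [set a | c <= join_family a z]%SET.
have iS : inl (inord i) \in S by rewrite inE /join_family inordK // ge_min lexx.
have jS : inr (inord j) \in S.
  by rewrite inE /join_family inordK // ge_min lexx orbT.
have S2 : (2 <= #|S|)%N.
  by apply/card_gt1P; exists (inl (inord i)), (inr (inord j)).
have Snm : (#|S| <= n.+1 + m.+1)%N.
  rewrite -[X in (_ <= X + _)%N]card_ord -[X in (_ <= _ + X)%N]card_ord.
  by rewrite -card_sum max_card.
exists (#|S| - 2)%N.
  by rewrite leq_subLR add2n; move: Snm; rewrite addSn addnS.
exists S.
  by split; [rewrite -addn2 subnK | exists (inord i) | exists (inord j)].
by apply: top_set_ge; rewrite lt_min phi_i psi_j.
Qed.

End mixed_top_sets.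

Lemma hdist_cover_prod {X Y X' Y' : topologicalType}
    (f g : X -> Y) (f' g' : X' -> Y') n m :
  normal_space (X * X')%type ->
  hdist_cover f g n -> hdist_cover f' g' m ->
  hdist_cover (prod_map f f') (prod_map g g') (n + m).
Proof.
move=> nXX' [U [oU [cU hU]]] [V [oV [cV hV]]].
have [j jn|z|phi [cphi phiU phi_cover]] :=
    @normal_open_cover_gt0 _ nXX' (fun j => U j `*` [set: X']) n.
- exact/open_setXT/oU.
- by have [j jn Uj] := cU z.1; exists j.
have [j jm|z|psi [cpsi psiV psi_cover]] :=
    @normal_open_cover_gt0 _ nXX' (fun j => [set: X] `*` V j) m.
- exact/open_setTX/oV.
- by have [j jm Vj] := cV z.2; exists j.
pose v := join_family (n := n) (m := m) phi psi.
have open_v S : open (top_set v S).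
  by apply: open_top_set => -[i|j]; [exact: cphi | exact: cpsi].
exists (fun k => \bigcup_(S in mixed k) top_set v S); split; [|split].
- by move=> k _; apply: bigcup_open => S _.
- move=> z.
  have [k km [S mS tS]] := mixed_top_set_cover (phi_cover z) (psi_cover z).
  by exists k => //; exists S.
move=> k _; apply: homotopic_on_bigcup => //.
  move=> S S' [cS _ _] [cS' _ _] [z [tS tS']].
  by apply: top_set_card_inj tS tS' _; rewrite cS cS'.
move=> S [_ [i iS] [j jS]].
apply: (@homotopic_onS _ _ _ (U i `*` V j)); last first.
  by apply: homotopic_on_prod; [apply: hU | apply: hV]; rewrite -ltnS.
move=> z [pos _].
by have [[Ui _] [_ Vj]] := (phiU i z (pos _ iS), psiV j z (pos _ jS)).
Qed.

Lemma hdist_Some_cover {X Y : topologicalType} (f g : X -> Y) n :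
  hdist f g = Some n -> hdist_cover f g n.
Proof.
by rewrite /hdist; case: pselect => // h [<-]; case: ex_minnP => k /asboolP.
Qed.

Lemma hdist_cover_ole {X Y : topologicalType} (f g : X -> Y) k :
  hdist_cover f g k -> ole (hdist f g) (Some k).
Proof.
move=> hk; rewrite /hdist; case: pselect => [h|[]]; last by exists k.
by case: ex_minnP => n _; apply; exact/asboolP.
Qed.

Theorem theorem3p20 (X Y X' Y' : topologicalType)
  (f g : X -> Y) (f' g' : X' -> Y')
  (cf : continuous f) (cg : continuous g)
  (cf' : continuous f') (cg' : continuous g')
  (hN : normal_space (X * X')%type) :
  ole (hdist (prod_map f f') (prod_map g g')) (oadd (hdist f g) (hdist f' g')).
Proof.
case E: (hdist f g) => [n|]; last by case: hdist.
case E': (hdist f' g') => [m|]; last by case: hdist.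
apply/hdist_cover_ole/hdist_cover_prod => //.
  exact: hdist_Some_cover E.
exact: hdist_Some_cover E'.
Qed.
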